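(* If $\theta_0,\theta_1\in V_\Lambda\setminus\mathcal W(\mathcal G)$ lie in different path components of $V_\Lambda\setminus\mathcal W(\mathcal G)$, then $\mathcal P(\theta_0)\ne\mathcal P(\theta_1)$.
   Context: Let $\Lambda$ be a finite dimensional algebra over a field with $n$ isoclasses of simple modules, and $\mathrm{mod}\text-\Lambda$ the category of finitely generated right $\Lambda$-modules. Fix a torsion class $\mathcal G\subseteq\mathrm{mod}\text-\Lambda$ (closed under isomorphisms, extensions and quotients). For $B\in\mathcal G$, a subobject of $B$ is a submodule in $\mathcal G$; a subobject $A\subseteq B$ is strict if $A\cap B'\in\mathcal G$ for every subobject $B'$ of $B$; a strict quotient of $B$ is $B/A$ with $A$ a strict subobject. Let $V_\Lambda=\mathrm{Hom}_{\mathbb Z}(K_0\Lambda,\mathbb R)\cong\mathbb R^n$ (with its Euclidean topology); $\theta(M)$ denotes $\theta$ applied to the dimension vector of $M$. For $M\in\mathcal G$, the pseudo-wall $D_{\mathcal G}(M)$ is the set of $\theta\in V_\Lambda$ with $\theta(M)=0$ and $\theta(M')\le0$ for every strict subobject $M'$ of $M$. $\mathcal W(\theta)$ is the class of $X\in\mathcal G$ with $\theta\in D_{\mathcal G}(X)$, and $\mathcal W(\mathcal G)$ is the set of $\theta$ with $\mathcal W(\theta)\ne\{0\}$, equivalently the union of the $D_{\mathcal G}(M)$ over nonzero $M\in\mathcal G$. $\mathcal P(\theta)$ is the class consisting of $0$ and all nonzero $M\in\mathcal G$ such that $\theta(M'')>0$ for every nonzero strict quotient $M''$ of $M$ (including $M''=M$).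 *)

From HB Require Import structures.
From mathcomp Require Import all_boot all_order all_algebra.
From mathcomp Require Import falgebra.
From mathcomp Require Import all_classical all_reals all_analysis.

Set Implicit Arguments.
Unset Strict Implicit.
Unset Printing Implicit Defensive.

Import Order.TTheory GRing.Theory Num.Theory numFieldNormedType.Exports.
Local Open Scope ring_scope.

Section Modules.

Variables (F : fieldType) (A : falgType F).

(* A finitely generated right A-module, given concretely as a finite-dimensional
   F-vector space F^rdim (row vectors) with a right action
   m . a := m *m ract a. *)
Record rmod := RMod { rdim : nat; ract : A -> 'M[F]_rdim }.

Definition is_rmod (M : rmod) : Prop :=
  [/\ forall (c : F) (a b : A), ract M (c *: a + b) = c *: ract M a + ract M b,
      ract M 1 = 1%:M
    & forall a b : A, ract M (a * b) = ract M a *m ract M b].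

(* Submodules of M are the A-stable subspaces (row spaces of square matrices). *)
Definition stable (M : rmod) (U : 'M[F]_(rdim M)) : Prop :=
  forall a : A, (U *m ract M a <= U)%MS.

Definition submod (M : rmod) (U : 'M[F]_(rdim M)) : rmod :=
  @RMod (\rank U)
    (fun a => row_base U *m ract M a *m (invmx (row_ebase U) *m pid_mx (\rank U))).

(* The quotient module M / U (coordinates in a basis of a complement). *)
Definition quotmod (M : rmod) (U : 'M[F]_(rdim M)) : rmod :=
  @RMod (\rank (cokermx U))
    (fun a => (row_base (cokermx U) *m row_ebase U) *m ract M a *m col_base (cokermx U)).

Definition rmod_iso (M N : rmod) : Prop :=
  exists (f : 'M[F]_(rdim M, rdim N)) (g : 'M[F]_(rdim N, rdim M)),
    [/\ f *m g = 1%:M, g *m f = 1%:M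
      & forall a : A, ract M a *m f = f *m ract N a].

Definition simple_rmod (M : rmod) : Prop :=
  (0 < rdim M)%N /\
  forall U : 'M[F]_(rdim M), stable U -> U = 0 \/ row_full U.

Definition torsion_class (G : rmod -> Prop) : Prop :=
  [/\ forall M N, is_rmod M -> is_rmod N -> rmod_iso M N -> G M -> G N,
      forall M (U : 'M[F]_(rdim M)), is_rmod M -> stable U ->
        G (submod U) -> G (quotmod U) -> G M
    & forall M (U : 'M[F]_(rdim M)), is_rmod M -> stable U -> G M -> G (quotmod U)].

(* (n, S, dimv) describes K_0: S enumerates the isoclasses of simple modules
   without repetition, and dimv is the dimension vector (composition
   multiplicities), characterised as the iso-invariant function additive on
   short exact sequences with dimv (S i) = e_i. *)
Definition dimension_vector (n : nat) (S : 'I_n -> rmod)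
    (dimv : rmod -> 'I_n -> nat) : Prop :=
  [/\ forall i, is_rmod (S i) /\ simple_rmod (S i),
      forall i j, rmod_iso (S i) (S j) -> i = j,
      forall M, is_rmod M -> simple_rmod M -> exists i, rmod_iso M (S i)
    & forall i j, dimv (S i) j = (i == j : nat)] /\
  [/\ forall M N, is_rmod M -> is_rmod N -> rmod_iso M N -> dimv M = dimv N
    & forall M (U : 'M[F]_(rdim M)), is_rmod M -> stable U ->
        forall i, dimv M i = (dimv (submod U) i + dimv (quotmod U) i)%N].

Section Stability.

Variables (R : realType) (n : nat) (dimv : rmod -> 'I_n -> nat)
  (G : rmod -> Prop).

(* theta(M) for theta in V_Lambda = Hom(K_0, R) = R^n. *)
Definition theta_of (theta : 'I_n -> R) (M : rmod) : R :=
  \sum_(i < n) theta i * (dimv M i)%:R.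

Definition subobj (B : rmod) (U : 'M[F]_(rdim B)) : Prop :=
  stable U /\ G (submod U).

Definition strict_subobj (B : rmod) (U : 'M[F]_(rdim B)) : Prop :=
  subobj U /\ forall U' : 'M[F]_(rdim B), subobj U' -> G (submod (U :&: U')%MS).

Definition pseudo_wall (M : rmod) (theta : 'I_n -> R) : Prop :=
  theta_of theta M = 0 /\
  forall U : 'M[F]_(rdim M), strict_subobj U -> theta_of theta (submod U) <= 0.

Definition wall_set (theta : 'I_n -> R) : Prop :=
  exists X : rmod, [/\ is_rmod X, G X, (0 < rdim X)%N & pseudo_wall X theta].

Definition Pclass (theta : 'I_n -> R) (M : rmod) : Prop :=
  rdim M = 0%N \/
  (G M /\ forall U : 'M[F]_(rdim M), strict_subobj U ->
     (0 < rdim (quotmod U))%N -> 0 < theta_of theta (quotmod U)).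

Definition path_connected_outside_walls (theta0 theta1 : 'I_n -> R) : Prop :=
  exists gamma : R -> 'I_n -> R,
    [/\ forall i, ({within `[(0 : R), 1], continuous (fun t => gamma t i)})%classic,
        gamma 0 = theta0, gamma 1 = theta1
      & forall t, 0 <= t <= 1 -> ~ wall_set (gamma t)].

End Stability.
End Modules.

From HB Require Import structures.
From mathcomp Require Import all_boot all_order all_algebra.
From mathcomp Require Import falgebra.
From mathcomp Require Import all_classical all_reals all_analysis.
From mathcomp Require Import lra ring.
Import Order.TTheory GRing.Theory Num.Theory numFieldNormedType.Exports.
Local Open Scope ring_scope.
Set Implicit Arguments.
Unset Strict Implicit.

(* If P(theta0) = P(theta1), the segment theta_t = theta0 + t (theta1 - theta0)
   avoids W(G). Suppose theta_t lies in D_G(X) with X <> 0. A nonzero strict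
   subobject of X in P(theta0) = P(theta1) would have positive theta0- and
   theta1-values, hence a positive theta_t-value, which the pseudo-wall forbids.
   For a theta off the walls whose class P(theta) contains no nonzero strict
   subobject of X, induction on the rank shows theta(U) < 0 for every nonzero
   strict subobject U of X, X itself included. So theta0(X) < 0 and
   theta1(X) < 0, whence theta_t(X) < 0, contradicting theta_t(X) = 0. *)

Section Modules.
Variables (F : fieldType) (A : falgType F).
Local Notation rmod := (@rmod F A).

(* The module carried by the row space of [B], in the coordinates given by a
   right inverse [E] of [B]; [submod U] is the case [B = row_base U]. *)
Definition rmod_of_basis (M : rmod) k (B : 'M[F]_(k, rdim M)) (E : 'M[F]_(rdim M, k)) :
  rmod := @RMod F A k (fun a => B *m ract M a *m E).

Lemma mulmx_retract k n (B : 'M[F]_(k, n)) E m (C : 'M[F]_(m, n)) :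
  B *m E = 1%:M -> (C <= B)%MS -> C *m E *m B = C.
Proof. by move=> BE /submxP [D ->]; rewrite -!mulmxA (mulmxA B) BE mul1mx. Qed.

Lemma is_rmod_of_basis (M : rmod) k (B : 'M[F]_(k, rdim M)) E :
  is_rmod M -> B *m E = 1%:M -> (forall a, (B *m ract M a <= B)%MS) ->
  is_rmod (rmod_of_basis B E).
Proof.
case=> linM oneM mulM BE stB; split.
- by move=> c a b /=; rewrite linM mulmxDr mulmxDl -scalemxAr -!scalemxAl.
- by rewrite /= oneM mulmx1 BE.
- by move=> a b; rewrite /= mulM !mulmxA (mulmx_retract BE (stB a)).
Qed.

Lemma rmod_iso_sym (M N : rmod) : rmod_iso M N -> rmod_iso N M.
Proof.
case=> f [g [fg gf fM]]; exists g, f; split=> // a.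
have := congr1 (fun X => g *m X *m g) (fM a).
by rewrite !mulmxA gf mul1mx -!mulmxA fg mulmx1 => <-.
Qed.

Lemma rmod_iso_trans (M N P : rmod) : rmod_iso M N -> rmod_iso N P -> rmod_iso M P.
Proof.
case=> f [g [fg gf fM]] [f' [g' [fg' gf' fN]]]; exists (f *m f'), (g' *m g); split.
- by rewrite mulmxA -(mulmxA f) fg' mulmx1 fg.
- by rewrite mulmxA -(mulmxA g') gf mulmx1 gf'.
- by move=> a; rewrite mulmxA fM -mulmxA fN mulmxA.
Qed.

Lemma rmod_iso_ext k (f g : A -> 'M[F]_k) : f =1 g -> rmod_iso (RMod f) (RMod g).
Proof.
by move=> fg; exists 1%:M, 1%:M; split; rewrite ?mulmx1 // => a /=; rewrite mulmx1 mul1mx fg.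
Qed.

Lemma is_rmod_rdim0 (M : rmod) : rdim M = 0%N -> is_rmod M.
Proof. by case: M => k f /= k0; subst k; split=> *; rewrite [LHS]flatmx0 [RHS]flatmx0. Qed.

Lemma rmod_iso_rdim0 (M N : rmod) : rdim M = 0%N -> rdim N = 0%N -> rmod_iso M N.
Proof.
case: M N => k f [l g] /= k0 l0; subst k l.
by exists 0, 0; split=> *; rewrite [LHS]flatmx0 [RHS]flatmx0.
Qed.

Lemma rmod_of_basis_iso (M : rmod) k1 k2 (B1 : 'M[F]_(k1, rdim M)) E1
    (B2 : 'M[F]_(k2, rdim M)) E2 :
  B1 *m E1 = 1%:M -> B2 *m E2 = 1%:M -> (B1 :=: B2)%MS ->
  (forall a, (B1 *m ract M a <= B1)%MS) ->
  rmod_iso (rmod_of_basis B1 E1) (rmod_of_basis B2 E2).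
Proof.
move=> BE1 BE2 eB stB1; have s12 : (B1 <= B2)%MS by rewrite eB.
have s21 : (B2 <= B1)%MS by rewrite eB.
exists (B1 *m E2), (B2 *m E1); split.
- by rewrite mulmxA (mulmx_retract BE2 s12) BE1.
- by rewrite mulmxA (mulmx_retract BE1 s21) BE2.
- by move=> a /=; rewrite !mulmxA (mulmx_retract BE1 (stB1 a)) (mulmx_retract BE2 s12).
Qed.

Definition row_base_inv (M : rmod) (U : 'M[F]_(rdim M)) : 'M[F]_(rdim M, \rank U) :=
  invmx (row_ebase U) *m pid_mx (\rank U).

Lemma row_base_invK (M : rmod) (U : 'M[F]_(rdim M)) : row_base U *m row_base_inv U = 1%:M.
Proof.
rewrite /row_base /row_base_inv mulmxA -(mulmxA (pid_mx _)) mulmxV ?row_ebase_unit //.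
by rewrite mulmx1 mul_pid_mx !minnn (minn_idPr (rank_leq_col U)) pid_mx_1.
Qed.

Lemma stable_row_base (M : rmod) (U : 'M[F]_(rdim M)) :
  stable U -> forall a, (row_base U *m ract M a <= row_base U)%MS.
Proof. by move=> stU a; rewrite !eq_row_base (eqmxMr _ (eq_row_base U)) stU. Qed.

Lemma is_rmod_submod (M : rmod) (U : 'M[F]_(rdim M)) :
  is_rmod M -> stable U -> is_rmod (submod U).
Proof. by move=> HM stU; apply: is_rmod_of_basis HM (row_base_invK U) (stable_row_base stU). Qed.

Lemma submod_eqmx_iso (M : rmod) (U V : 'M[F]_(rdim M)) :
  stable U -> (U :=: V)%MS -> rmod_iso (submod U) (submod V).
Proof.
move=> stU eUV.
have eB : (row_base U :=: row_base V)%MS.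
  exact: eqmx_trans (eq_row_base U) (eqmx_trans eUV (eqmx_sym (eq_row_base V))).
exact: rmod_of_basis_iso (row_base_invK U) (row_base_invK V) eB (stable_row_base stU).
Qed.

Lemma submod1_iso (M : rmod) : rmod_iso M (submod (1%:M : 'M[F]_(rdim M))).
Proof.
apply: (@rmod_iso_trans _ (rmod_of_basis (1%:M : 'M[F]_(rdim M)) 1%:M)).
  by case: M => k f; apply: rmod_iso_ext => a /=; rewrite mul1mx mulmx1.
apply: rmod_of_basis_iso (mulmx1 _) (row_base_invK _) (eqmx_sym (eq_row_base _)) _.
by move=> a; rewrite submx1.
Qed.

Lemma rdim_submod0 (M : rmod) : rdim (submod (0 : 'M[F]_(rdim M))) = 0%N.
Proof. exact: mxrank0. Qed.

Lemma stable0 (M : rmod) : stable (0 : 'M[F]_(rdim M)).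
Proof. by move=> a; rewrite mul0mx sub0mx. Qed.

Lemma stable1 (M : rmod) : stable (1%:M : 'M[F]_(rdim M)).
Proof. by move=> a; rewrite submx1. Qed.

Lemma stable_cap (M : rmod) (U W : 'M[F]_(rdim M)) :
  stable U -> stable W -> stable (U :&: W)%MS.
Proof.
move=> stU stW a; rewrite sub_capmx.
by rewrite (submx_trans (submxMr _ (capmxSl _ _)) (stU a)) (submx_trans (submxMr _ (capmxSr _ _)) (stW a)).
Qed.

Lemma capmxMfree m1 m2 n p (A1 : 'M[F]_(m1, n)) (A2 : 'M[F]_(m2, n)) (B : 'M[F]_(n, p)) :
  row_free B -> ((A1 :&: A2) *m B :=: A1 *m B :&: A2 *m B)%MS.
Proof.
move=> freeB; apply/eqmxP; rewrite -(mxrank_leqif_eq (capmxMr _ _ _)).2.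
rewrite mxrankMfree //; apply/eqP.
have e1 := mxrank_sum_cap A1 A2; have e2 := mxrank_sum_cap (A1 *m B) (A2 *m B).
rewrite -(addsmxMr A1 A2 B) !mxrankMfree // in e2.
by apply/eqP; rewrite -(eqn_add2l (\rank (A1 + A2)%MS)) e1 e2.
Qed.

(* Submodules of [submod U] correspond to submodules of [M] contained in [U]. *)
Section Lift.
Variables (M : rmod) (U : 'M[F]_(rdim M)).
Local Notation B := (row_base U).
Local Notation E := (row_base_inv U).

Definition lift (V : 'M[F]_(rdim (submod U))) : 'M[F]_(rdim M) := <<V *m B>>%MS.

Lemma lift_rows_stable m (W : 'M[F]_(m, rdim (submod U))) :
  stable U -> (forall a, (W *m ract (submod U) a <= W)%MS) ->
  forall a, (W *m B *m ract M a <= W *m B)%MS.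
Proof.
move=> stU stW a.
have -> : W *m B *m ract M a = W *m ract (submod U) a *m B.
  rewrite /= -[RHS]mulmxA (mulmx_retract (row_base_invK U) (stable_row_base stU a)).
  by rewrite [RHS]mulmxA.
exact: submxMr.
Qed.

Lemma stable_lift (V : 'M[F]_(rdim (submod U))) : stable U -> stable V -> stable (lift V).
Proof. by move=> stU stV a; rewrite /lift (eqmxMr _ (genmxE _)) genmxE lift_rows_stable. Qed.

Lemma submod_lift_iso (V : 'M[F]_(rdim (submod U))) :
  stable U -> stable V -> rmod_iso (submod V) (submod (lift V)).
Proof.
move=> stU stV; apply: (@rmod_iso_trans _ (rmod_of_basis (row_base V *m B) (E *m row_base_inv V))).
  by apply: rmod_iso_ext => a /=; rewrite !mulmxA.
have BE : row_base V *m B *m (E *m row_base_inv V) = 1%:M.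
  by rewrite mulmxA -(mulmxA (row_base V)) row_base_invK mulmx1 row_base_invK.
have eB : (row_base V *m B :=: row_base (lift V))%MS.
  apply: eqmx_trans (eqmxMr _ (eq_row_base V)) _.
  exact: eqmx_trans (eqmx_sym (genmxE _)) (eqmx_sym (eq_row_base _)).
exact: rmod_of_basis_iso BE (row_base_invK _) eB (lift_rows_stable stU (stable_row_base stV)).
Qed.

Lemma rank_lift (V : 'M[F]_(rdim (submod U))) : \rank (lift V) = \rank V.
Proof. by rewrite /lift genmxE mxrankMfree // row_base_free. Qed.

Lemma lift_sub (V : 'M[F]_(rdim (submod U))) : (lift V <= U)%MS.
Proof. by rewrite /lift genmxE (submx_trans (submxMl V _)) ?eq_row_base. Qed.

Lemma lift_cap (V W : 'M[F]_(rdim (submod U))) : (lift (V :&: W) :=: lift V :&: lift W)%MS.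
Proof.
apply: eqmx_trans (genmxE _) _; apply: eqmx_trans (capmxMfree _ _ (row_base_free U)) _.
exact: eqmx_sym (cap_eqmx (genmxE _) (genmxE _)).
Qed.

Lemma lift_coordsK (W : 'M[F]_(rdim M)) : (W <= U)%MS -> (lift <<W *m E>> :=: W)%MS.
Proof.
move=> sWU; apply: eqmx_trans (genmxE _) _; apply: eqmx_trans (eqmxMr _ (genmxE _)) _.
by rewrite (mulmx_retract (row_base_invK U)) ?eq_row_base.
Qed.

End Lift.

Section TorsionClass.
Variable (G : rmod -> Prop).
Hypothesis G_iso : forall M N, is_rmod M -> is_rmod N -> rmod_iso M N -> G M -> G N.
Hypothesis G_quot :
  forall M (U : 'M[F]_(rdim M)), is_rmod M -> stable U -> G M -> G (quotmod U).

Lemma G_rdim0 (M Z : rmod) : is_rmod M -> G M -> rdim Z = 0%N -> G Z.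
Proof.
move=> HM GM Z0; have Q0 : rdim (quotmod (1%:M : 'M[F]_(rdim M))) = 0%N.
  by rewrite /= mxrank_coker mxrank1 subnn.
apply: G_iso (G_quot HM (stable1 M) GM); [exact: is_rmod_rdim0 Q0 | exact: is_rmod_rdim0 Z0 |].
exact: rmod_iso_rdim0.
Qed.

Lemma strict_subobj0 (M : rmod) : is_rmod M -> G M -> strict_subobj G (0 : 'M[F]_(rdim M)).
Proof.
move=> HM GM; split; first split.
- exact: stable0.
- exact: G_rdim0 HM GM (rdim_submod0 M).
- by move=> W _; apply: G_rdim0 HM GM _; rewrite /= cap0mx mxrank0.
Qed.

Lemma strict_subobj1 (M : rmod) : is_rmod M -> G M -> strict_subobj G (1%:M : 'M[F]_(rdim M)).
Proof.
move=> HM GM; split; first split.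
- exact: stable1.
- exact: G_iso HM (is_rmod_submod HM (stable1 M)) (submod1_iso M) GM.
- by move=> W [_ GW]; rewrite cap1mx.
Qed.

(* The intersection of [lift V] with a subobject [W] of [M] is the lift of the
   intersection of [V] with the coordinates of the strict intersection [U :&: W]. *)
Lemma strict_subobj_lift (M : rmod) (U : 'M[F]_(rdim M)) (V : 'M[F]_(rdim (submod U))) :
  is_rmod M -> strict_subobj G U -> strict_subobj G V -> strict_subobj G (lift V).
Proof.
move=> HM [[stU GU] capU] [[stV GV] capV].
have HU := is_rmod_submod HM stU; have stL := stable_lift stU stV.
split; first split => //.
  by apply: G_iso (submod_lift_iso stU stV) GV; apply: is_rmod_submod.
move=> W [stW GW].
pose W0 : 'M[F]_(rdim (submod U)) := <<(U :&: W) *m row_base_inv U>>%MS.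
have stUW := stable_cap stU stW.
have stW0 : stable W0.
  move=> a; rewrite (eqmxMr _ (genmxE _)) genmxE /= mulmxA [_ *m (_ *m ract M a)]mulmxA.
  by rewrite mulmx_retract ?row_base_invK ?submxMr ?eq_row_base ?capmxSl.
have eW0 : (lift W0 :=: U :&: W)%MS by apply: lift_coordsK; exact: capmxSl.
have GW0 : G (submod W0).
  apply: G_iso (capU W (conj stW GW)); [exact: is_rmod_submod | exact: is_rmod_submod |].
  apply: rmod_iso_trans (submod_eqmx_iso stUW (eqmx_sym eW0)) _.
  exact: rmod_iso_sym (submod_lift_iso stU stW0).
have stVW0 := stable_cap stV stW0.
apply: G_iso (capV W0 (conj stW0 GW0)); [exact: is_rmod_submod | |].
  exact: is_rmod_submod HM (stable_cap stL stW).
apply: rmod_iso_trans (submod_lift_iso stU stVW0) _.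
apply: submod_eqmx_iso; first exact: stable_lift stU stVW0.
apply: eqmx_trans (lift_cap V W0) _; apply: eqmx_trans (cap_eqmx (eqmx_refl _) eW0) _.
by rewrite capmxA; apply: cap_eqmx (capmx_idPl (lift_sub V)) (eqmx_refl W).
Qed.

Section Theta.
Variables (R : realType) (n : nat) (dimv : rmod -> 'I_n -> nat).
Hypothesis dimv_iso :
  forall M N, is_rmod M -> is_rmod N -> rmod_iso M N -> dimv M = dimv N.
Hypothesis dimv_add : forall M (U : 'M[F]_(rdim M)), is_rmod M -> stable U ->
  forall i, dimv M i = (dimv (submod U) i + dimv (quotmod U) i)%N.

Local Notation theta th M := (theta_of dimv th M).

Lemma theta_of_iso (th : 'I_n -> R) M N :
  is_rmod M -> is_rmod N -> rmod_iso M N -> theta th M = theta th N.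
Proof. by move=> HM HN iMN; rewrite /theta_of (dimv_iso HM HN iMN). Qed.

Lemma theta_of_submod_quotmod (th : 'I_n -> R) M (U : 'M[F]_(rdim M)) :
  is_rmod M -> stable U -> theta th M = theta th (submod U) + theta th (quotmod U).
Proof.
move=> HM stU; rewrite /theta_of -big_split; apply: eq_bigr => i _.
by rewrite (dimv_add HM stU) natrD mulrDr.
Qed.

Lemma theta_of_rdim0 (th : 'I_n -> R) Z : rdim Z = 0%N -> theta th Z = 0.
Proof.
move=> Z0; have HZ := is_rmod_rdim0 Z0.
have S0 := rdim_submod0 Z.
have Q0 : rdim (quotmod (0 : 'M[F]_(rdim Z))) = 0%N by rewrite /= mxrank_coker mxrank0 Z0.
have := theta_of_submod_quotmod th HZ (stable0 Z).
rewrite -(theta_of_iso th HZ (is_rmod_rdim0 S0) (rmod_iso_rdim0 Z0 S0)).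
rewrite -(theta_of_iso th HZ (is_rmod_rdim0 Q0) (rmod_iso_rdim0 Z0 Q0)) => ?; lra.
Qed.

Lemma Pclass_theta_gt0 (th : 'I_n -> R) (Y : rmod) : is_rmod Y -> (0 < rdim Y)%N ->
  Pclass dimv G th Y -> 0 < theta th Y.
Proof.
move=> HY Ypos [Y0|[GY posY]]; first by rewrite Y0 in Ypos.
have := posY _ (strict_subobj0 HY GY).
rewrite /= mxrank_coker mxrank0 subn0 => /(_ Ypos).
by rewrite (theta_of_submod_quotmod th HY (stable0 Y)) (theta_of_rdim0 _ (rdim_submod0 Y)) add0r.
Qed.

(* A module outside P(theta) has a strict subobject V with theta(Y / V) <= 0.
   If V <> 0 then theta(V) < 0; if V = 0 then theta(Y) <= 0, and theta(Y) = 0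
   would put theta on the pseudo-wall of Y. *)
Lemma theta_lt0_of_not_Pclass (th : 'I_n -> R) (Y : rmod) :
  is_rmod Y -> G Y -> ~ wall_set dimv G th -> ~ Pclass dimv G th Y ->
  (forall V : 'M[F]_(rdim Y), strict_subobj G V -> (0 < \rank V < rdim Y)%N ->
     theta th (submod V) < 0) ->
  theta th Y < 0.
Proof.
move=> HY GY nW nP lt0V.
have Ypos : (0 < rdim Y)%N by rewrite lt0n; apply/eqP => Y0; apply: nP; left.
have [V /not_implyP [sV /not_implyP [QVpos /negP]]] : exists V : 'M[F]_(rdim Y),
    ~ (strict_subobj G V -> (0 < rdim (quotmod V))%N -> 0 < theta th (quotmod V)).
  by apply/existsNP => posQ; apply: nP; right.
rewrite -leNgt => QVle0; have [[stV _] _] := sV.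
rewrite /= mxrank_coker subn_gt0 in QVpos.
have Yle0 : theta th Y <= 0.
  rewrite (theta_of_submod_quotmod th HY stV).
  have [V0|Vpos] := posnP (\rank V); first by rewrite theta_of_rdim0 ?add0r.
  have VltY : (0 < \rank V < rdim Y)%N by rewrite Vpos QVpos.
  by have := lt0V V sV VltY; lra.
rewrite lt_neqAle Yle0 andbT; apply/eqP => Y0; apply: nW.
exists Y; split=> //; split=> // W sW; have [[stW _] _] := sW.
have [W0|Wpos] := posnP (\rank W); first by rewrite theta_of_rdim0.
have [Wfull|Wlt] := eqVneq (\rank W) (rdim Y); last first.
  by rewrite ltW // lt0V // Wpos ltn_neqAle Wlt rank_leq_row.
have eW : (1%:M :=: W)%MS by apply/eqmxP; rewrite submx1 sub1mx -col_leq_rank Wfull leqnn.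
rewrite -Y0 -(theta_of_iso th (is_rmod_submod HY (stable1 Y)) (is_rmod_submod HY stW)
  (submod_eqmx_iso (stable1 Y) eW)).
by rewrite (theta_of_iso th HY (is_rmod_submod HY (stable1 Y)) (submod1_iso Y)).
Qed.

Lemma theta_strict_subobj_lt0 (th : 'I_n -> R) (X : rmod) :
  is_rmod X -> ~ wall_set dimv G th ->
  (forall U : 'M[F]_(rdim X), strict_subobj G U -> (0 < \rank U)%N ->
     ~ Pclass dimv G th (submod U)) ->
  forall U : 'M[F]_(rdim X), strict_subobj G U -> (0 < \rank U)%N ->
    theta th (submod U) < 0.
Proof.
move=> HX nW nP U; have [k] := ubnP (\rank U); elim: k U => // k IH U ltUk sU Upos.
have [[stU GU] _] := sU; have HU := is_rmod_submod HX stU.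
apply: (theta_lt0_of_not_Pclass HU GU nW (nP U sU Upos)) => V sV /andP[Vpos ltVU].
have [[stV _] _] := sV.
rewrite (theta_of_iso th (is_rmod_submod HU stV) (is_rmod_submod HX (stable_lift stU stV))
  (submod_lift_iso stU stV)).
apply: IH; rewrite ?rank_lift //; last exact: strict_subobj_lift.
exact: leq_trans ltVU ltUk.
Qed.

Lemma theta_lt0_of_no_Pclass_subobj (th : 'I_n -> R) (X : rmod) :
  is_rmod X -> G X -> (0 < rdim X)%N -> ~ wall_set dimv G th ->
  (forall U : 'M[F]_(rdim X), strict_subobj G U -> (0 < \rank U)%N ->
     ~ Pclass dimv G th (submod U)) ->
  theta th X < 0.
Proof.
move=> HX GX Xpos nW nP.
rewrite (theta_of_iso th HX (is_rmod_submod HX (stable1 X)) (submod1_iso X)).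
by apply: theta_strict_subobj_lt0 HX nW nP _ (strict_subobj1 HX GX) _; rewrite mxrank1.
Qed.

Lemma path_connected_of_Pclass_eq (th0 th1 : 'I_n -> R) :
  ~ wall_set dimv G th0 -> ~ wall_set dimv G th1 ->
  (forall M : rmod, is_rmod M -> (Pclass dimv G th0 M <-> Pclass dimv G th1 M)) ->
  path_connected_outside_walls dimv G th0 th1.
Proof.
move=> nW0 nW1 eqP01.
exists (fun t i => th0 i + t * (th1 i - th0 i)); split.
- move=> i; apply: continuous_subspaceT => x.
  apply: (@continuousD _ _ _ (fun=> th0 i) (fun t : R => t * (th1 i - th0 i))).
    exact: cst_continuous.
  by apply: (@continuousM _ _ id (fun=> th1 i - th0 i)); [exact: cvg_id | exact: cst_continuous].
- by apply/funext => i; rewrite mul0r addr0.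
- by apply/funext => i; rewrite mul1r addrC subrK.
move=> t /andP[t0 t1] [X [HX GX Xpos [Xt0 Xtle0]]].
have theta_t M : theta (fun i => th0 i + t * (th1 i - th0 i)) M =
    theta th0 M + t * (theta th1 M - theta th0 M).
  by rewrite /theta_of -sumrB mulr_sumr -big_split; apply: eq_bigr => i _ /=; ring.
have noP th : th = th0 \/ th = th1 -> forall U : 'M[F]_(rdim X),
    strict_subobj G U -> (0 < \rank U)%N -> ~ Pclass dimv G th (submod U).
  move=> eth U sU Upos Pth; have [[stU _] _] := sU; have HU := is_rmod_submod HX stU.
  have [P0 P1] : Pclass dimv G th0 (submod U) /\ Pclass dimv G th1 (submod U).
    by case: eth Pth => -> Pth; split=> //; apply/(eqP01 _ HU).
  have := Pclass_theta_gt0 HU Upos P0; have := Pclass_theta_gt0 HU Upos P1.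
  have := Xtle0 U sU; rewrite theta_t => *; nra.
have := theta_lt0_of_no_Pclass_subobj HX GX Xpos nW0 (noP th0 (or_introl erefl)).
have := theta_lt0_of_no_Pclass_subobj HX GX Xpos nW1 (noP th1 (or_intror erefl)).
by move: Xt0; rewrite theta_t => *; nra.
Qed.

End Theta.
End TorsionClass.
End Modules.

Unset Implicit Arguments.
Set Strict Implicit.

Theorem mainTheorem15 (F : fieldType) (A : falgType F) (n : nat)
  (S : 'I_n -> rmod A) (dimv : rmod A -> 'I_n -> nat)
  (G : rmod A -> Prop) (R : realType) (theta0 theta1 : 'I_n -> R) :
  dimension_vector S dimv ->
  torsion_class G ->
  ~ wall_set dimv G theta0 ->
  ~ wall_set dimv G theta1 ->
  ~ path_connected_outside_walls dimv G theta0 theta1 ->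
  ~ (forall M : rmod A, is_rmod M ->
       (Pclass dimv G theta0 M <-> Pclass dimv G theta1 M)).
Proof.
move=> [_ [dimv_iso dimv_add]] [G_iso _ G_quot] nW0 nW1 nPath eqP01; apply: nPath.
exact: (path_connected_of_Pclass_eq G_iso G_quot dimv_iso dimv_add nW0 nW1 eqP01).
Qed.
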